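(* Let $O_1,\ldots,O_M$ be observables on $\mathbb{C}^d$ with $0\preceq O_i\preceq \mathbb{I}_d$. Under $\gamma$-adversarial corruption, the algorithm that splits the copies evenly into $M$ groups, measures each copy in group $i$ with the two-outcome POVM $\{O_i,\mathbb{I}_d-O_i\}$, and outputs for each $i$ the empirical mean of the indicator of the outcome $O_i$ in group $i$, achieves an error of $\varepsilon=O(\min\{\gamma M,1\})$ using $n=M\log(M/\delta)/\varepsilon^2$ copies. This is optimal in the sense that (in the worst case over the observables) every algorithm that directly measures each copy with one of the measurements $\{O_i,\mathbb{I}_d-O_i\}$ must incur an error of $\varepsilon=\Omega(\gamma M)$.
   Context: Let $\rho\in\mathbb{C}^{d\times d}$ be an unknown quantum state of which $n$ copies are available, each measured separately. The goal is to output $E_1,\ldots,E_M$ with $|E_i-\operatorname{Tr}[O_i\rho]|\le\varepsilon$ for all $i$ with probability at least $1-\delta$. $\gamma$-adversarial corruption model: after all $n$ outcomes are obtained, an adversary with perfect knowledge of the measurements arbitrarily changes a $\gamma$-fraction of the outcomes, and the algorithm only sees the corrupted outcomes. *)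

From mathcomp Require Import all_boot all_order all_algebra.
From mathcomp Require Import all_classical all_reals all_analysis.
From mathcomp Require Import complex.

Set Implicit Arguments.
Unset Strict Implicit.
Unset Printing Implicit Defensive.

Import Order.TTheory GRing.Theory Num.Theory.
Local Open Scope ring_scope.

Section Quantum.
Variable R : realType.

Definition adjmx (d : nat) (A : 'M[R[i]]_d) : 'M[R[i]]_d := map_mx Num.conj A^T.

Definition hermitian (d : nat) (A : 'M[R[i]]_d) : Prop := adjmx A = A.

Definition psd (d : nat) (A : 'M[R[i]]_d) : Prop :=
  hermitian A /\
  forall v : 'cV[R[i]]_d, 0 <= ((map_mx Num.conj v^T) *m A *m v) 0 0.

Definition loewner_le (d : nat) (A B : 'M[R[i]]_d) : Prop := psd (B - A).

Definition density (d : nat) (rho : 'M[R[i]]_d) : Prop :=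
  psd rho /\ \tr rho = 1.

(* Born rule: probability of outcome O of the POVM {O, I - O} on state rho,
   i.e. Tr[O rho] (a real number for PSD O, rho; we take its real part). *)
Definition born (d : nat) (O rho : 'M[R[i]]_d) : R := complex.Re (\tr (O *m rho)).

End Quantum.

Section Experiment.
Variable R : realType.
(* Copies are indexed by a finite type I (n = #|I| copies); copy j is measured
   with the two-outcome POVM {O_(a j), I - O_(a j)}; outcome true = "O_(a j)". *)
Variables (I : finType) (M : nat) (a : I -> 'I_M).

Definition outcomes := {ffun I -> bool}.

Definition outcome_prob (p : 'I_M -> R) (x : outcomes) : R :=
  \prod_(j : I) (if x j then p (a j) else 1 - p (a j)).

Definition hamming (x y : outcomes) : nat := #|[set j | x j != y j]|.

(* gamma-adversary: after seeing all outcomes, changes at most a gamma-fraction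
   of them (it knows the measurements and the state, which are fixed before). *)
Definition gamma_adversary (gamma : R) (adv : outcomes -> outcomes) : Prop :=
  forall x, ((hamming (adv x) x)%:R <= gamma * #|I|%:R)%R.

Definition success_prob (p : 'I_M -> R) (adv : outcomes -> outcomes)
  (est : outcomes -> 'I_M -> R) (eps : R) : R :=
  \sum_(x : outcomes | [forall i, `|est (adv x) i - p i| <= eps])
     outcome_prob p x.

End Experiment.

(* The algorithm of the theorem: n = M*m copies, group i = copies (i, k), k < m;
   the estimate for O_i is the empirical frequency of outcome O_i in group i. *)
Definition empirical_mean (R : realType) (M m : nat)
  (y : {ffun 'I_M * 'I_m -> bool}) (i : 'I_M) : R :=
  (#|[set k : 'I_m | y (i, k)]|)%:R / m%:R.

(* Upper bound: the M group counts are independent binomials.  The moment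
   generating function together with e^u <= 1 + u + 2u^2 (u <= 1/2) gives a
   Chernoff bound, and a union bound over the M groups and both signs shows
   that every uncorrupted group mean is within eps/2 of its Born probability
   except with probability 2M exp(-m eps^2/32) <= delta.  The adversary flips
   at most gamma M m <= m eps/2 outcomes, which moves each group count by at
   most that much.

   Lower bound: take the M orthogonal rank-one projections on C^(M+1) and an
   observable i0 measured on at most n/M copies.  For the state supported on
   the extra basis vector every outcome is 0, so the estimator must be
   eps-accurate on the all-zero string.  For the state putting weight
   gamma M/4 on e_i0, the adversary erases every string with at most gamma n
   ones; by Markov's inequality the other strings have probability at most
   1/4, so success with probability 2/3 forces gamma M/4 <= 2 eps. *)

From mathcomp Require Import all_boot all_order all_algebra.
From mathcomp Require Import all_classical all_reals all_analysis.
From mathcomp Require Import complex.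
From mathcomp Require Import ring lra.

Set Implicit Arguments.
Unset Strict Implicit.
Unset Printing Implicit Defensive.

Import Order.TTheory GRing.Theory Num.Theory.
Local Open Scope ring_scope.
Local Open Scope sesquilinear_scope.

Section PositiveSemidefinite.
Variable R : realType.
Local Notation C := R[i].

Lemma psd_conjugate_diag_ge0 d (A P : 'M[C]_d) k :
  psd A -> 0 <= (P *m A *m P ^t*) k k.
Proof.
move=> [_ formA]; have := formA ((row k P) ^t*).
have -> : ((row k P) ^t*) ^t* = row k P.
  by apply/matrixP=> i j; rewrite !mxE conjCK.
suff -> : (P *m A *m P ^t*) k k = (row k P *m A *m (row k P) ^t*) 0 0 by [].
by rewrite -!row_mul !mxE; apply: eq_bigr => j _; rewrite !mxE.
Qed.

Lemma mxtrace_mul_psd_ge0 d (A B : 'M[C]_d) : psd A -> psd B -> 0 <= \tr (A *m B).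
Proof.
move=> psdA psdB; have [hermB _] := psdB.
have /orthomx_spectralP : B \is normalmx by apply/normalmxP; rewrite [B ^t*]hermB.
have := spectral_unitarymx B.
move: (spectralmx B) (spectral_diag B) => P D /[dup] unitP /invmx_unitary -> defB.
have PPt : P *m P ^t* = 1%:M by apply/unitarymxP.
have diagD : diag_mx D = P *m B *m P ^t*.
  by rewrite defB !mulmxA PPt mul1mx -!mulmxA PPt mulmx1.
have -> : \tr (A *m B) = \tr (P *m A *m P ^t* *m diag_mx D).
  by rewrite defB (mulmxA A) mxtrace_mulC !mulmxA.
rewrite mul_mx_diag /mxtrace; apply: sumr_ge0 => k _; rewrite mxE.
apply: mulr_ge0; first exact: psd_conjugate_diag_ge0.
have -> : D 0 k = diag_mx D k k by rewrite mxE eqxx mulr1n.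
by rewrite diagD; apply: psd_conjugate_diag_ge0.
Qed.

Lemma born_ge0 d (O rho : 'M[C]_d) : psd O -> psd rho -> 0 <= born O rho.
Proof.
by move=> psdO psdrho; have := mxtrace_mul_psd_ge0 psdO psdrho; rewrite lecE => /andP[].
Qed.

Lemma born_in01 d (O rho : 'M[C]_d) :
  loewner_le 0 O -> loewner_le O 1%:M -> density rho -> 0 <= born O rho <= 1.
Proof.
rewrite /loewner_le subr0 => psdO psdIO [psdrho tr1].
rewrite born_ge0 //= -subr_ge0.
have := born_ge0 psdIO psdrho.
by rewrite /born mulmxBl mul1mx raddfB /= tr1 raddfB.
Qed.

Lemma diag_mx_psd d (w : 'rV[C]_d) : (forall k, 0 <= w 0 k) -> psd (diag_mx w).
Proof.
move=> w_ge0; split.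
  apply/matrixP => i j; rewrite !mxE rmorphMn /= geC0_conj //.
  by case: eqVneq => [->|i_neq_j]; rewrite ?eqxx // eq_sym (negbTE i_neq_j).
move=> v; rewrite !mxE; apply: sumr_ge0 => k _.
rewrite !mxE (bigD1 k) //= big1 ?addr0 => [|j /negbTE j_neq_k]; last first.
  by rewrite !mxE j_neq_k mulr0n mulr0.
rewrite !mxE eqxx mulr1n mulrAC mulrC mulr_ge0 //.
by rewrite mulrC mul_conjC_ge0.
Qed.

End PositiveSemidefinite.

Section WeightedSums.
Variables (R : realType) (X : finType) (w : X -> R).
Hypothesis w_ge0 : forall x, 0 <= w x.

Lemma sum_le_expect (P : pred X) (f : X -> R) :
  (forall x, 0 <= f x) -> (forall x, P x -> 1 <= f x) ->
  \sum_(x | P x) w x <= \sum_x w x * f x.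
Proof.
move=> f_ge0 f_ge1; rewrite [X in _ <= X](bigID P) /= -[X in X <= _]addr0.
apply: lerD; last by apply: sumr_ge0 => x _; apply: mulr_ge0.
by apply: ler_sum => x Px; rewrite -[X in X <= _]mulr1 ler_wpM2l ?f_ge1.
Qed.

Lemma sum_union_le (J : finType) (P : pred X) (E : J -> pred X) :
  (forall x, P x -> exists j, E j x) ->
  \sum_(x | P x) w x <= \sum_j \sum_(x | E j x) w x.
Proof.
move=> covers.
apply: (le_trans (sum_le_expect (f := fun x => \sum_j (E j x)%:R) _ _)).
- by move=> x; apply: sumr_ge0 => j _; apply: ler0n.
- move=> x /covers [j Ejx]; rewrite (bigD1 j) //= Ejx lerDl.
  by apply: sumr_ge0 => k _; apply: ler0n.
under eq_bigr do rewrite mulr_sumr.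
rewrite exchange_big /=; apply: ler_sum => j _.
rewrite [X in _ <= X]big_mkcond; apply: ler_sum => x _.
by case: (E j x); rewrite ?mulr1 ?mulr0.
Qed.

End WeightedSums.

Section ExponentialBounds.
Variable R : realType.

Lemma expR_le_quadratic (u : R) : u <= 1 / 2 -> expR u <= 1 + u + 2 * u ^+ 2.
Proof.
move=> u_le; have pos : 0 < 1 - u by lra.
rewrite -(ler_pM2r pos); apply: (@le_trans _ _ 1).
  have := ler_wpM2l (ltW (expR_gt0 u)) (expR_ge1Dx (- u)).
  by rewrite -expRD subrr expR0.
have -> : (1 + u + 2 * u ^+ 2) * (1 - u) = 1 + u ^+ 2 * (1 - 2 * u) by ring.
by rewrite lerDl mulr_ge0 ?sqr_ge0 //; lra.
Qed.

Lemma bernoulli_mgf_le (q u : R) : 0 <= q <= 1 -> u <= 1 / 2 ->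
  q * expR u + (1 - q) <= expR (q * u + 2 * u ^+ 2).
Proof.
move=> /andP[q_ge0 q_le1] u_le; apply: le_trans (expR_ge1Dx _).
have := ler_wpM2l q_ge0 (expR_le_quadratic u_le).
have : q * u ^+ 2 <= u ^+ 2 by rewrite ler_piMl ?sqr_ge0.
lra.
Qed.

Lemma union_bound_budget (K m delta eps : R) : 1 <= K -> 0 < delta <= 1 / 2 ->
  64 * ln (K / delta) <= m * eps ^+ 2 ->
  K * 2 * expR (- (m * (eps / 2) ^+ 2 / 8)) <= delta.
Proof.
move=> K_ge1 /andP[delta_gt0 delta_le] budget.
have ratio_gt0 : 0 < K / delta by rewrite divr_gt0 //; lra.
have expL : expR (- ln (K / delta)) = delta / K by rewrite expRN lnK ?invf_div.
have tail_le : expR (- (m * (eps / 2) ^+ 2 / 8)) <= (delta / K) ^+ 2.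
  by rewrite -expL -expRM_natl ler_expR expr_div_n; lra.
apply: le_trans (ler_wpM2l _ tail_le) _; first lra.
have -> : K * 2 * (delta / K) ^+ 2 = 2 * delta ^+ 2 / K by field; lra.
by rewrite ler_pdivrMr; nra.
Qed.

End ExponentialBounds.

Section OutcomeDistribution.
Variables (R : realType) (I : finType) (M : nat) (a : I -> 'I_M) (p : 'I_M -> R).
Local Notation prob := (outcome_prob a p).

Lemma sum_ffun_prod (F : I -> bool -> R) :
  \sum_(x : {ffun I -> bool}) \prod_j F j (x j) = \prod_j (F j true + F j false).
Proof.
by rewrite -bigA_distr_bigA; apply: eq_bigr => j _; rewrite big_bool.
Qed.

Lemma expect_prod (P : pred I) (g : bool -> R) :
  \sum_x prob x * \prod_(j | P j) g (x j) =
  \prod_(j | P j) (p (a j) * g true + (1 - p (a j)) * g false).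
Proof.
transitivity (\sum_(x : {ffun I -> bool}) \prod_j
    ((if x j then p (a j) else 1 - p (a j)) * (if P j then g (x j) else 1))).
  by apply: eq_bigr => x _; rewrite big_mkcond -big_split.
rewrite (sum_ffun_prod (fun j b =>
  (if b then p (a j) else 1 - p (a j)) * (if P j then g b else 1))).
rewrite [RHS]big_mkcond; apply: eq_bigr => j _.
by case: (P j); rewrite // !mulr1 addrC subrK.
Qed.

Lemma expect_outcome j : \sum_x prob x * (x j)%:R = p (a j).
Proof.
have := expect_prod (pred1 j) (fun b => b%:R).
rewrite !big_pred1_eq /= mulr1 mulr0 addr0 => <-.
by apply: eq_bigr => x _; rewrite big_pred1_eq.
Qed.

Definition count_true (x : {ffun I -> bool}) : nat := #|[set j | x j]|.

Lemma count_trueE x : (count_true x)%:R = \sum_j (x j)%:R :> R.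
Proof.
rewrite /count_true -sum1_card natr_sum big_mkcond /=.
by apply: eq_bigr => j _; rewrite inE; case: (x j).
Qed.

Lemma expect_count_true : \sum_x prob x * (count_true x)%:R = \sum_j p (a j).
Proof.
under eq_bigr do rewrite count_trueE mulr_sumr.
by rewrite exchange_big; apply: eq_bigr => j _; apply: expect_outcome.
Qed.

Definition group_sum (i : 'I_M) (x : {ffun I -> bool}) : R := \sum_(j | a j == i) (x j)%:R.

Definition group_size i : nat := #|[pred j | a j == i]|.

Lemma expect_expR_group_sum i u :
  \sum_x prob x * expR (u * group_sum i x) =
  (p i * expR u + (1 - p i)) ^+ group_size i.
Proof.
have -> : (p i * expR u + (1 - p i)) ^+ group_size i =
    \prod_(j | a j == i) (p (a j) * expR (u * true%:R) + (1 - p (a j)) * expR (u * false%:R)).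
  rewrite /= mulr1n mulr0n mulr0 mulr1 expR0 /group_size -prodr_const.
  by apply: eq_bigr => j /eqP->; rewrite mulr1.
rewrite -(expect_prod [pred j | a j == i] (fun b => expR (u * b%:R))).
by apply: eq_bigr => x _; rewrite /group_sum mulr_sumr expR_sum.
Qed.

Lemma hammingE (x y : {ffun I -> bool}) : (hamming x y)%:R = \sum_j (x j != y j)%:R :> R.
Proof.
rewrite /hamming -sum1_card natr_sum big_mkcond /=.
by apply: eq_bigr => j _; rewrite inE; case: (_ != _).
Qed.

Lemma group_sum_hamming i x y :
  `|group_sum i y - group_sum i x| <= (hamming y x)%:R.
Proof.
rewrite /group_sum -sumrB hammingE; apply: le_trans (ler_norm_sum _ _ _) _.
rewrite [X in _ <= X](bigID (fun j => a j == i)) /= -[X in X <= _]addr0.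
apply: lerD; last by apply: sumr_ge0 => j _; apply: ler0n.
apply: ler_sum => j _; case: (y j); case: (x j);
  by rewrite ?subrr ?normr0 ?subr0 ?sub0r ?normrN ?normr1.
Qed.

Lemma outcome_prob_sum1 : \sum_x prob x = 1.
Proof.
transitivity (\sum_x prob x * \prod_(j | xpred0 j) (fun=> 1 : R) (x j)).
  by apply: eq_bigr => x _; rewrite big_pred0_eq mulr1.
by rewrite (expect_prod xpred0 (fun=> 1)) big_pred0_eq.
Qed.

Hypothesis p_in01 : forall i, 0 <= p i <= 1.

Lemma outcome_prob_ge0 x : 0 <= prob x.
Proof.
apply: prodr_ge0 => j _; have /andP[p_ge0 p_le1] := p_in01 (a j).
by case: (x j); rewrite ?subr_ge0.
Qed.

Lemma group_sum_tail i (s t : R) : `|s| = 1 -> 0 <= t <= 2 ->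
  \sum_(x | (group_size i)%:R * t < s * (group_sum i x - (group_size i)%:R * p i)) prob x
  <= expR (- ((group_size i)%:R * t ^+ 2 / 8)).
Proof.
set k := (group_size i)%:R; move=> s_unit t_in; pose l := t / 4.
have l_ge0 : 0 <= l by rewrite /l; lra.
have ls_le : l * s <= 1 / 2.
  by apply: le_trans (ler_norm _) _; rewrite normrM s_unit mulr1 ger0_norm /l; lra.
have ls_sq : (l * s) ^+ 2 = l ^+ 2.
  by rewrite exprMn -(real_normK (num_real s)) s_unit expr1n mulr1.
pose c := expR (- (l * s * k * p i) - l * k * t).
apply: (le_trans (sum_le_expect outcome_prob_ge0
  (f := fun x => expR (l * (s * (group_sum i x - k * p i) - k * t))) _ _)).
- by move=> x; apply: expR_ge0.
- move=> x /= deviates; apply: le_trans (expR_ge1Dx _).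
  by rewrite lerDl mulr_ge0 // subr_ge0 ltW.
have exp_split x : expR (l * (s * (group_sum i x - k * p i) - k * t)) =
    c * expR (l * s * group_sum i x).
  by rewrite -expRD; congr expR; ring.
under eq_bigr do rewrite exp_split mulrCA.
rewrite -mulr_sumr expect_expR_group_sum.
have mgf_le : (p i * expR (l * s) + (1 - p i)) ^+ group_size i <=
    expR (k * (p i * (l * s) + 2 * (l * s) ^+ 2)).
  have /andP[p_ge0 p_le1] := p_in01 i.
  rewrite expRM_natl; apply: lerXn2r; rewrite ?nnegrE ?expR_ge0 ?bernoulli_mgf_le //.
  by rewrite addr_ge0 ?mulr_ge0 ?subr_ge0 ?expR_ge0.
apply: le_trans (ler_wpM2l (expR_ge0 _) mgf_le) _.
have -> : - (k * t ^+ 2 / 8) =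
    - (l * s * k * p i) - l * k * t + k * (p i * (l * s) + 2 * (l * s) ^+ 2).
  by rewrite ls_sq /l; field.
by rewrite -expRD lexx.
Qed.

End OutcomeDistribution.

Section Success.
Variables (R : realType) (I : finType) (M : nat) (a : I -> 'I_M) (p : 'I_M -> R).
Variables (adv : {ffun I -> bool} -> {ffun I -> bool}) (est : {ffun I -> bool} -> 'I_M -> R).
Variable eps : R.
Local Notation accurate x := [forall i, `|est (adv x) i - p i| <= eps].

Lemma success_probE :
  success_prob a p adv est eps = 1 - \sum_(x | ~~ accurate x) outcome_prob a p x.
Proof. by rewrite -(outcome_prob_sum1 a p) (bigID (fun x => accurate x)) /= addrK. Qed.

Lemma success_prob_eps_ge1 : (forall i, 0 <= p i <= 1) ->
  (forall x i, 0 <= est x i <= 1) -> 1 <= eps -> success_prob a p adv est eps = 1.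
Proof.
move=> p_in01 est_in01 eps_ge1; rewrite /success_prob -(outcome_prob_sum1 a p).
apply: eq_bigl => x; apply/forallP => i.
have /andP[? ?] := est_in01 (adv x) i; have /andP[? ?] := p_in01 i.
rewrite ler_norml; apply/andP; split; lra.
Qed.

End Success.

Section GroupedEmpiricalMeans.
Variables (R : realType) (M m : nat).
Local Notation grid := ('I_M * 'I_m)%type.
Local Notation group_of := (fun ij : grid => ij.1).

Lemma group_size_grid i : group_size group_of i = m.
Proof.
have -> : group_size group_of i = #|finset.setX [set i] [set: 'I_m]|.
  by apply: eq_card => -[i' k]; rewrite !inE andbT.
by rewrite cardsX cards1 cardsT card_ord mul1n.
Qed.

Lemma empirical_meanE (y : {ffun grid -> bool}) i :
  empirical_mean R y i = group_sum R group_of i y / m%:R.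
Proof.
congr (_ / _); transitivity (\sum_(i' | i' == i) \sum_(k < m) (y (i', k))%:R : R).
  rewrite big_pred1_eq -sum1_card natr_sum big_mkcond /=.
  by apply: eq_bigr => k _; rewrite inE; case: (y (i, k)).
by rewrite pair_big_dep; apply: eq_big => [[i' k]|[i' k] _] /=; rewrite ?andbT.
Qed.

Lemma empirical_mean_in01 (y : {ffun grid -> bool}) i : 0 <= empirical_mean R y i <= 1.
Proof.
rewrite /empirical_mean; have [m0|m_gt0] := posnP m.
  by rewrite (_ : m%:R = 0) ?invr0 ?mulr0 ?lexx ?ler01 // m0.
rewrite divr_ge0 ?ler0n //= ler_pdivrMr ?ltr0n // mul1r ler_nat.
by rewrite -[X in (_ <= X)%N]card_ord max_card.
Qed.

Local Notation sign b := (if b then 1 else -1 : R).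

Lemma corrupted_mean_deviation (x y : {ffun grid -> bool}) (p : 'I_M -> R) i eps :
  (0 < m)%N -> (hamming y x)%:R <= m%:R * eps / 2 ->
  eps < `|empirical_mean R y i - p i| ->
  exists b, m%:R * (eps / 2) < sign b * (group_sum R group_of i x - m%:R * p i).
Proof.
move=> m_gt0 close far; have m_pos : 0 < m%:R :> R by rewrite ltr0n.
have {}far : m%:R * eps < `|group_sum R group_of i y - m%:R * p i|.
  move: far; have -> : empirical_mean R y i - p i =
      (group_sum R group_of i y - m%:R * p i) / m%:R.
    by rewrite empirical_meanE; field; rewrite gt_eqF.
  by rewrite normf_div (gtr0_norm m_pos) ltr_pdivlMr // mulrC.
have ham := group_sum_hamming R group_of i x y.
have tri := ler_distD (group_sum R group_of i x) (group_sum R group_of i y) (m%:R * p i).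
have : m%:R * (eps / 2) < `|group_sum R group_of i x - m%:R * p i| by lra.
by rewrite ltr_normr => /orP[dev|dev]; [exists true | exists false]; rewrite ?mul1r ?mulN1r.
Qed.

Lemma grouped_mean_failure_le (p : 'I_M -> R) adv gamma eps :
  (forall i, 0 <= p i <= 1) -> (0 < m)%N -> 0 <= eps <= 4 ->
  gamma * M%:R <= eps / 2 -> gamma_adversary gamma adv ->
  \sum_(x | ~~ [forall i, `|empirical_mean R (adv x) i - p i| <= eps]) outcome_prob group_of p x
  <= (M * 2)%:R * expR (- (m%:R * (eps / 2) ^+ 2 / 8)).
Proof.
move=> p_in01 m_gt0 eps_in gM adv_ok.
pose deviates (j : 'I_M * bool) x :=
  m%:R * (eps / 2) < sign j.2 * (group_sum R group_of j.1 x - m%:R * p j.1).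
apply: le_trans (sum_union_le (outcome_prob_ge0 group_of p_in01) (E := deviates) _) _.
  move=> x; case/fintype.forallPn => i; rewrite -ltNge => far.
  have close : (hamming (adv x) x)%:R <= m%:R * eps / 2.
    apply: le_trans (adv_ok x) _; rewrite card_prod !card_ord natrM mulrA.
    by have := ler_wpM2r (ler0n _ m) gM; lra.
  by have [b dev] := corrupted_mean_deviation m_gt0 close far; exists (i, b).
have tail j : \sum_(x | deviates j x) outcome_prob group_of p x <=
    expR (- (m%:R * (eps / 2) ^+ 2 / 8)).
  have := group_sum_tail group_of p_in01 j.1 (s := sign j.2) (t := eps / 2).
  rewrite group_size_grid; apply; last by lra.
  by case: j.2; rewrite ?normrN normr1.
apply: le_trans (ler_sum _ (fun j _ => tail j)) _.
by rewrite sumr_const card_prod card_ord card_bool [X in _ <= X]mulr_natl lexx.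
Qed.

Lemma grouped_mean_success (p : 'I_M -> R) adv gamma delta eps :
  (0 < M)%N -> (forall i, 0 <= p i <= 1) -> 0 < delta <= 1 / 2 -> 0 < eps ->
  64 * Num.min (gamma * M%:R) 1 <= eps -> 64 * ln (M%:R / delta) / eps ^+ 2 <= m%:R ->
  gamma_adversary gamma adv ->
  1 - delta <= success_prob group_of p adv (@empirical_mean R M m) eps.
Proof.
move=> M_gt0 p_in01 delta_in eps_gt0 eps_ge m_ge adv_ok.
have [eps_ge1|eps_lt1] := lerP 1 eps.
  by rewrite success_prob_eps_ge1 // ?subr_le0 //; [lra | exact: empirical_mean_in01].
have gM : gamma * M%:R <= eps / 2.
  have : Num.min (gamma * M%:R) 1 <= eps / 64 by rewrite ler_pdivlMr //; lra.
  by rewrite ge_min => /orP[|]; lra.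
have M_ge1 : 1 <= M%:R :> R by rewrite ler1n.
have budget : 64 * ln (M%:R / delta) <= m%:R * eps ^+ 2.
  by rewrite -ler_pdivrMr ?exprn_gt0.
have m_gt0 : (0 < m)%N.
  rewrite -(ltr0n R) -(pmulr_lgt0 _ (exprn_gt0 2 eps_gt0)); apply: lt_le_trans budget.
  by rewrite mulr_gt0 // ln_gt0 // ltr_pdivlMr; move: delta_in => /andP[]; lra.
rewrite success_probE lerD2l lerN2.
apply: le_trans (grouped_mean_failure_le p_in01 m_gt0 _ gM adv_ok) _; first lra.
by rewrite natrM; apply: union_bound_budget.
Qed.

End GroupedEmpiricalMeans.

Section MeasuredEstimatorsLowerBound.
Variables (R : realType) (I : finType) (M : nat) (a : I -> 'I_M).
Local Notation n := #|I|.
Local Notation x0 := ([ffun=> false] : {ffun I -> bool}).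

Lemma pigeonhole_group : (0 < M)%N -> exists i0, (M * group_size a i0 <= n)%N.
Proof.
move=> M_gt0; have [i0 _ i0_min] := arg_minnP (group_size a) (isT : predT (Ordinal M_gt0)).
exists i0; have -> : n = (\sum_(i < M) group_size a i)%N.
  rewrite -sum1_card (partition_big a predT) //=.
  by apply: eq_bigr => i _; rewrite sum1_card.
by rewrite -[X in (X * _)%N]card_ord -sum_nat_const leq_sum.
Qed.

Lemma outcome_prob_const0 x : outcome_prob a (fun=> 0 : R) x = (x == x0)%:R.
Proof.
have [->|] := eqVneq x x0; first by rewrite /outcome_prob big1 // => j _; rewrite ffunE subr0.
move=> /eqP x_neq0; have [j xj] : exists j, x j.
  apply/existsP; apply: contra_notT x_neq0 => /existsPn x_false.
  by apply/ffunP => j; rewrite ffunE; apply/negbTE.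
by rewrite /outcome_prob (bigD1 j) //= xj mul0r.
Qed.

Lemma success_prob_const0 (adv : {ffun I -> bool} -> {ffun I -> bool}) est (eps : R) :
  success_prob a (fun=> 0) adv est eps = [forall i, `|est (adv x0) i| <= eps]%:R.
Proof.
rewrite /success_prob big_mkcond (bigD1 x0) //= big1 ?addr0 => [|x /negbTE x_neq0].
  rewrite outcome_prob_const0 eqxx.
  rewrite (eq_forallb (fun i => _ : _ = (`|est (adv x0) i| <= eps))) => [|i]; last by rewrite subr0.
  by case: ifP.
by rewrite outcome_prob_const0 x_neq0; case: ifP.
Qed.

Lemma hamming_refl (x : {ffun I -> bool}) : hamming x x = 0%N.
Proof. by apply: eq_card0 => j; rewrite inE eqxx. Qed.

Lemma hamming_false (x : {ffun I -> bool}) : hamming x0 x = count_true x.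
Proof. by apply: eq_card => j; rewrite !inE ffunE; case: (x j). Qed.

Definition erase_if_sparse (gamma : R) (x : {ffun I -> bool}) : {ffun I -> bool} :=
  if (count_true x)%:R <= gamma * n%:R then x0 else x.

Lemma erase_if_sparse_adversary gamma : 0 <= gamma -> gamma_adversary gamma (erase_if_sparse gamma).
Proof.
move=> gamma_ge0 x; rewrite /erase_if_sparse; case: ifP => [sparse|_].
  by rewrite hamming_false.
by rewrite hamming_refl mulr_ge0.
Qed.

Lemma success_prob_erase_le (p : 'I_M -> R) est eps gamma :
  (forall i, 0 <= p i <= 1) -> 0 <= gamma -> ~~ [forall i, `|est x0 i - p i| <= eps] ->
  success_prob a p (erase_if_sparse gamma) est eps <=
  (\sum_j p (a j)) / Num.max 1 (gamma * n%:R).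
Proof.
move=> p_in01 gamma_ge0 x0_inaccurate; set T := Num.max 1 (gamma * n%:R).
have T_gt0 : 0 < T by rewrite lt_max ltr01.
rewrite /success_prob -expect_count_true mulr_suml; under [X in _ <= X]eq_bigr do rewrite -mulrA.
apply: (@sum_le_expect R {ffun I -> bool} _ (outcome_prob_ge0 a p_in01)) => [x|x].
  by rewrite divr_ge0 ?ler0n // ltW.
rewrite /erase_if_sparse; case: ifP => [_ x0_accurate|dense _].
  by rewrite x0_accurate in x0_inaccurate.
move: dense => /negbT; rewrite -ltNge => dense.
rewrite ler_pdivlMr // mul1r ge_max (ltW dense) andbT ler1n lt0n.
by apply: contraTneq dense => ->; rewrite -leNgt mulr_ge0.
Qed.

Definition spike (i0 : 'I_M) (dl : R) (i : 'I_M) : R := if i == i0 then dl else 0.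

Lemma spike_in01 i0 dl : 0 <= dl <= 1 -> forall i, 0 <= spike i0 dl i <= 1.
Proof. by move=> dl_in01 i; rewrite /spike; case: ifP; rewrite ?lexx ?ler01. Qed.

Lemma sum_spike i0 dl : \sum_j spike i0 dl (a j) = (group_size a i0)%:R * dl.
Proof. by rewrite -big_mkcond /= sumr_const mulr_natl. Qed.

Lemma measured_estimators_lower_bound est gamma eps i0 :
  0 <= gamma -> gamma * M%:R <= 1 -> (M * group_size a i0 <= n)%N ->
  (forall dl adv, 0 <= dl <= 1 -> gamma_adversary gamma adv ->
     2 / 3 <= success_prob a (spike i0 dl) adv est eps) ->
  gamma * M%:R <= 8 * eps.
Proof.
move=> gamma_ge0 gM_le1 i0_rare succeeds.
have gM_ge0 : 0 <= gamma * M%:R by rewrite mulr_ge0.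
have x0_accurate i : `|est x0 i| <= eps.
  have id_adversary : gamma_adversary gamma (@id {ffun I -> bool}).
    by move=> x; rewrite hamming_refl mulr_ge0.
  have := succeeds 0 id _ id_adversary; rewrite lexx ler01 => /(_ isT).
  have -> : spike i0 0 = fun=> 0 by apply/funext => j; rewrite /spike; case: ifP.
  by rewrite success_prob_const0; case: forallP => [+ _|_ /= ?]; [apply | lra].
rewrite leNgt; apply/negP => gM_big; pose dl := gamma * M%:R / 4.
have dl_in01 : 0 <= dl <= 1 by apply/andP; split; rewrite /dl; lra.
have x0_inaccurate : ~~ [forall i, `|est x0 i - spike i0 dl i| <= eps].
  apply/fintype.forallPn; exists i0; rewrite /spike eqxx -ltNge.
  have := x0_accurate i0; rewrite ler_norml ltr_normr /dl => /andP[? ?].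
  by apply/orP; right; lra.
have := le_trans (succeeds dl _ dl_in01 (erase_if_sparse_adversary gamma_ge0))
  (success_prob_erase_le (spike_in01 i0 dl_in01) gamma_ge0 x0_inaccurate).
rewrite sum_spike; set T := Num.max 1 (gamma * n%:R) => succeeds_dl.
have T_gt0 : 0 < T by rewrite lt_max ltr01.
have spike_mass : (group_size a i0)%:R * dl <= T / 4.
  have rare : (group_size a i0)%:R * M%:R <= n%:R :> R by rewrite -natrM ler_nat mulnC.
  have : (group_size a i0)%:R * M%:R * gamma <= n%:R * gamma by rewrite ler_wpM2r.
  have : gamma * n%:R <= T by rewrite le_max lexx orbT.
  rewrite /dl; lra.
have : (group_size a i0)%:R * dl / T <= 1 / 4 by rewrite ler_pdivrMr //; lra.
lra.
Qed.

End MeasuredEstimatorsLowerBound.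

Section HardInstance.
Variables (R : realType) (M : nat).
Local Notation C := R[i].
Local Notation slot i := (widen_ord (leqnSn M) i).

Definition basis_projection (i : 'I_M) : 'M[C]_M.+1 := diag_mx (\row_k (k == slot i)%:R).

Definition spiked_state (i0 : 'I_M) (dl : R) : 'M[C]_M.+1 :=
  diag_mx (\row_k if k == ord_max then (1 - dl)%:C%C else if k == slot i0 then dl%:C%C else 0).

Lemma slot_neq_max i : (slot i == ord_max) = false.
Proof. by apply/negbTE; rewrite -val_eqE /= neq_ltn ltn_ord. Qed.

Lemma slot_eq i j : (slot i == slot j) = (i == j).
Proof. by rewrite -val_eqE. Qed.

Lemma basis_projection_bounds i :
  loewner_le 0 (basis_projection i) /\ loewner_le (basis_projection i) 1%:M.
Proof.
rewrite /loewner_le subr0; split; first by apply: diag_mx_psd => k; rewrite mxE ler0n.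
have -> : 1%:M - basis_projection i = diag_mx (\row_k (1 - (k == slot i)%:R)).
  by apply/matrixP => k l; rewrite !mxE; case: (k == l); rewrite ?mulr1n ?mulr0n ?subr0.
by apply: diag_mx_psd => k; rewrite mxE; case: (k == slot i); rewrite ?subrr ?subr0.
Qed.

Lemma spiked_state_density i0 dl : 0 <= dl <= 1 -> density (spiked_state i0 dl).
Proof.
move=> /andP[dl_ge0 dl_le1]; split.
  apply: diag_mx_psd => k; rewrite mxE.
  by case: ifP => _; [rewrite ler0c subr_ge0 | case: ifP; rewrite ?ler0c].
rewrite mxtrace_diag (bigD1 ord_max) //= (bigD1 (slot i0)) ?slot_neq_max //=.
rewrite big1 ?addr0 => [|k /andP[/negbTE k_neq_max /negbTE k_neq_i0]]; last first.
  by rewrite mxE k_neq_max k_neq_i0.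
by rewrite !mxE eqxx slot_neq_max eqxx -rmorphD /= subrK.
Qed.

Lemma born_spiked_state i i0 dl :
  born (basis_projection i) (spiked_state i0 dl) = spike i0 dl i.
Proof.
rewrite /born mul_mx_diag /mxtrace (bigD1 (slot i)) //= big1 ?addr0 => [|k /negbTE k_neq].
  by rewrite !mxE eqxx mulr1n mul1r slot_neq_max slot_eq /spike; case: (i == i0).
by rewrite !mxE k_neq mul0rn mul0r.
Qed.

End HardInstance.

Theorem theorem3 (R : realType) :
  (* upper bound: the grouped empirical-mean algorithm achieves
     eps = O(min{gamma M, 1}) with n = M m, m = O(log(M/delta)/eps^2) *)
  (exists C : R, 0 < C /\
    forall (d M m : nat) (O : 'I_M -> 'M[R[i]]_d) (rho : 'M[R[i]]_d)
           (gamma delta eps : R),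
      (0 < M)%N ->
      (forall i, loewner_le 0 (O i) /\ loewner_le (O i) 1%:M) ->
      density rho ->
      0 <= gamma -> 0 < delta <= 1 / 2 -> 0 < eps ->
      C * Num.min (gamma * M%:R) 1 <= eps ->
      C * ln (M%:R / delta) / eps ^+ 2 <= m%:R ->
      forall adv : {ffun 'I_M * 'I_m -> bool} -> {ffun 'I_M * 'I_m -> bool},
        gamma_adversary gamma adv ->
        1 - delta <=
          success_prob (fun ij : 'I_M * 'I_m => ij.1)
            (fun i => born (O i) rho) adv (@empirical_mean R M m) eps)
  /\
  (* optimality: for worst-case observables, every algorithm that measures each
     copy with one of the POVMs {O_i, I - O_i} must have eps = Omega(gamma M) *)
  (exists c : R, 0 < c /\
    forall M : nat, (0 < M)%N ->
    exists (d : nat) (O : 'I_M -> 'M[R[i]]_d),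
      (forall i, loewner_le 0 (O i) /\ loewner_le (O i) 1%:M) /\
      forall (n : nat) (a : 'I_n -> 'I_M)
             (est : {ffun 'I_n -> bool} -> 'I_M -> R) (gamma eps : R),
        0 <= gamma -> gamma * M%:R <= 1 ->
        (forall rho : 'M[R[i]]_d, density rho ->
           forall adv : {ffun 'I_n -> bool} -> {ffun 'I_n -> bool},
             gamma_adversary gamma adv ->
             2 / 3 <= success_prob a (fun i => born (O i) rho) adv est eps) ->
        c * (gamma * M%:R) <= eps).
Proof.
split.
  exists 64; split => // d M m O rho gamma delta eps M_gt0 O_bounds rho_density _
    delta_in eps_gt0 eps_ge m_ge adv adv_ok.
  apply: (grouped_mean_success M_gt0 _ delta_in eps_gt0 eps_ge m_ge adv_ok) => i.
  by case: (O_bounds i) => O_ge0 O_le1; apply: born_in01.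
exists (1 / 8); split => // M M_gt0; exists M.+1, (@basis_projection R M).
split => [|n a est gamma eps gamma_ge0 gM_le1 succeeds]; first exact: basis_projection_bounds.
have [i0 i0_rare] := pigeonhole_group a M_gt0.
suff : gamma * M%:R <= 8 * eps by lra.
apply: (measured_estimators_lower_bound (est := est) gamma_ge0 gM_le1 i0_rare).
move=> dl adv dl_in01 adv_ok; have := succeeds _ (spiked_state_density i0 dl_in01) adv adv_ok.
by under eq_fun do rewrite born_spiked_state.
Qed.
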